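(* A homomorphism $f:N\to N'$ of finitely generated abelian groups is tame if and only if the augmentation map $\mathbb D(f)\to R\mathrm{Hom}([f],\mathbb Z)$ is an isomorphism in the derived category $D(\mathrm{Ab})$, if and only if $H^i(R\mathrm{Hom}([f],\mathbb Z))=0$ for all $i\neq 0$.
   Context: A homomorphism $f:N\to N'$ of finitely generated abelian groups is tame if $\operatorname{Cok}f$ is finite and $\operatorname{Ker}f$ is torsion-free (equivalently $f$ is injective on torsion subgroups). $[f]$ denotes the two-term cochain complex with $N$ in degree $0$, $N'$ in degree $1$, differential $f$, viewed in the derived category $D(\mathrm{Ab})$; $\mathbb D(f)=\mathrm{Hom}_{D(\mathrm{Ab})}([f],\mathbb Z)=H^0(R\mathrm{Hom}([f],\mathbb Z))$, and the augmentation map is the natural map from $H^0$ (placed in degree $0$) to the complex when the latter has cohomology only in degree $0$—more precisely the statement asserts that $R\mathrm{Hom}([f],\mathbb Z)$ is concentrated in degree $0$. *)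

From HB Require Import structures.
From mathcomp Require Import all_boot all_order all_algebra.
Set Implicit Arguments. Unset Strict Implicit. Unset Printing Implicit Defensive.
Import Order.TTheory GRing.Theory Num.Theory.
Local Open Scope ring_scope.

Definition fin_gen (N : zmodType) : Prop :=
  exists s : seq N, forall x : N,
    exists c : seq int, x = \sum_(i < size s) s`_i *~ c`_i.

Definition coker_finite (N N' : zmodType) (f : {additive N -> N'}) : Prop :=
  exists s : seq N', forall y : N', exists j : 'I_(size s), exists x : N,
    y = s`_j + f x.

Definition ker_torsion_free (N N' : zmodType) (f : {additive N -> N'}) : Prop :=
  forall x : N, f x = 0 -> forall n : nat, (0 < n)%N -> x *+ n = 0 -> x = 0.

Definition tame (N N' : zmodType) (f : {additive N -> N'}) : Prop :=
  coker_finite f /\ ker_torsion_free f.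

(* Q/Z-valued homomorphisms, represented by set-theoretic lifts to Q. *)
Definition is_int (q : rat) : Prop := exists z : int, q = z%:~R.

Definition QZhom (N : zmodType) (g : N -> rat) : Prop :=
  forall x y : N, is_int (g (x + y) - g x - g y).

Definition QZeq (N : zmodType) (g h : N -> rat) : Prop :=
  forall x : N, is_int (g x - h x).

(* RHom([f], Z) computed with the injective resolution 0 -> Z -> Q -> Q/Z -> 0:
   it is the total complex
     degree -1 : Hom(N', Q)
     degree  0 : Hom(N, Q) (+) Hom(N', Q/Z)
     degree  1 : Hom(N, Q/Z)
   with d(phi) = (phi o f, pi o phi) and d(a, b) = pi o a - b o f,
   and zero in all other degrees. *)

Definition RHom_H_m1_zero (N N' : zmodType) (f : {additive N -> N'}) : Prop :=
  forall phi : {additive N' -> rat},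
    (forall x : N, phi (f x) = 0) -> (forall y : N', is_int (phi y)) ->
    forall y : N', phi y = 0.

Definition RHom_H_1_zero (N N' : zmodType) (f : {additive N -> N'}) : Prop :=
  forall g : N -> rat, QZhom g ->
    exists a : {additive N -> rat}, exists b : N' -> rat,
      QZhom b /\ QZeq g (fun x => a x - b (f x)).

Definition RHom_H_zero (N N' : zmodType) (f : {additive N -> N'}) (i : int) : Prop :=
  if i == -1 then RHom_H_m1_zero f
  else if i == 1 then RHom_H_1_zero f
  else if i == 0 then False (* degree 0 is not characterized here; never used *)
  else True.

(* RHom([f], Z) is concentrated in degree 0, i.e. the augmentation
   D(f) -> RHom([f], Z) is an isomorphism. *)
Definition augmentation_iso (N N' : zmodType) (f : {additive N -> N'}) : Prop :=
  RHom_H_m1_zero f /\ RHom_H_1_zero f.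

From HB Require Import structures.
From mathcomp Require Import all_boot all_order all_algebra.
From mathcomp Require Import ring.
From Stdlib Require Import Classical ClassicalEpsilon.
Import Order.TTheory GRing.Theory Num.Theory.
Local Open Scope ring_scope.

(* The resolution Z -> Q -> Q/Z computes RHom([f], Z): its H^{-1} consists of
   the homomorphisms N' -> Z vanishing on f N, and its H^1 is the cokernel of
   (a, b) |-> a - b o f from Hom(N, Q) x Hom(N', Q/Z) to Hom(N, Q/Z).
   Everything rests on the divisibility of Q and Q/Z, in the form of one
   extension property: a map additive modulo P (P = 0 or Z) on a subgroup of a
   finitely generated group extends to the whole group, one generator at a time.
   If Cok f is finite, a multiple of every y lies in f N, which kills the
   elements of H^{-1}. Otherwise some y has no multiple in f N; extend 0 on f N
   and 1 on y to a homomorphism N' -> Q and clear the denominators of its values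
   on generators.
   If Ker f is torsion-free it is free, so a character g of N lifts to Q on
   Ker f; extend the lift to a : N -> Q. Then a - g vanishes on Ker f modulo Z,
   hence factors through f N and extends to a character b of N'. If x0 in Ker f
   has order d > 1, the character extending x0 |-> 1/d is not of the form
   a - b o f, since a kills x0 and b o f kills Ker f. *)

Set Implicit Arguments.
Unset Strict Implicit.

Fixpoint lincomb (N : zmodType) (l : seq N) (c : nat -> int) : N :=
  if l is y :: l' then y *~ c 0%N + lincomb l' (fun i => c i.+1) else 0.

Definition zspan (N : zmodType) (l : seq N) (x : N) := exists c, x = lincomb l c.

Definition zindep (N : zmodType) (l : seq N) :=
  forall c, lincomb l c = 0 -> forall i, (i < size l)%N -> c i = 0.

Section LinearCombinations.
Variable N : zmodType.
Implicit Types (l : seq N) (c : nat -> int).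

Lemma eq_lincomb l c c' :
  (forall i, (i < size l)%N -> c i = c' i) -> lincomb l c = lincomb l c'.
Proof.
elim: l c c' => [//|y l IH] c c' /= cc'.
by rewrite cc' // (IH (fun i => c i.+1) (fun i => c' i.+1)) // => i; exact: (cc' i.+1).
Qed.

Lemma lincomb0 l : lincomb l (fun _ => 0) = 0.
Proof. by elim: l => //= y l ->; rewrite mulr0z addr0. Qed.

Lemma lincombD l c c' :
  lincomb l (fun i => c i + c' i) = lincomb l c + lincomb l c'.
Proof.
elim: l c c' => [|y l IH] c c' /=; first by rewrite addr0.
by rewrite (IH (fun i => c i.+1) (fun i => c' i.+1)) mulrzDr addrACA.
Qed.

Lemma lincombN l c : lincomb l (fun i => - c i) = - lincomb l c.
Proof.
elim: l c => [|y l IH] c /=; first by rewrite oppr0.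
by rewrite (IH (fun i => c i.+1)) mulrNz opprD.
Qed.

Lemma lincombB l c c' :
  lincomb l (fun i => c i - c' i) = lincomb l c - lincomb l c'.
Proof. by rewrite (lincombD l c (fun i => - c' i)) lincombN. Qed.

Lemma raddf_lincomb (M : zmodType) (g : {additive N -> M}) l c :
  g (lincomb l c) = lincomb (map g l) c.
Proof.
elim: l c => [|y l IH] c /=; first exact: raddf0.
by rewrite raddfD raddfMz IH.
Qed.

Lemma lincomb_mapMn l c n :
  lincomb (map (fun x => x *+ n) l) c = lincomb l c *+ n.
Proof.
elim: l c => [|y l IH] c /=; first by rewrite mul0rn.
by rewrite IH mulrnDl -mulrz_nat mulrzAC mulrz_nat.
Qed.

Lemma fin_gen_zspan : fin_gen N -> exists s : seq N, forall x, zspan s x.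
Proof.
move=> [s gen_s]; exists s => x; have [c ->] := gen_s x.
exists (fun i => c`_i); elim: s c {gen_s} => [|y s IH] c; first by rewrite big_ord0.
rewrite big_ord_recl /=; case: c => [|k c] /=; last by rewrite -IH.
by rewrite lincomb0 big1 ?mulr0z ?addr0 // => i _; rewrite nth_nil mulr0z.
Qed.

End LinearCombinations.

Lemma subrACA (V : zmodType) (a b c d : V) : (a - b) - (c - d) = (a - c) - (b - d).
Proof. by rewrite !opprD !opprK addrACA. Qed.

Definition subgroup (N : zmodType) (D : N -> Prop) :=
  D 0 /\ forall x y, D x -> D y -> D (x - y).

Section Subgroups.
Variables (N : zmodType) (D : N -> Prop).
Hypothesis D_subgroup : subgroup D.

Lemma subgroup0 : D 0. Proof. by case: D_subgroup. Qed.

Lemma subgroupB x y : D x -> D y -> D (x - y).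
Proof. by case: D_subgroup => _; apply. Qed.

Lemma subgroupN x : D x -> D (- x).
Proof. by move=> Dx; rewrite -sub0r; apply: subgroupB (subgroup0) Dx. Qed.

Lemma subgroupD x y : D x -> D y -> D (x + y).
Proof. by move=> Dx Dy; rewrite -[y]opprK; apply: subgroupB Dx (subgroupN Dy). Qed.

Lemma subgroupD_eq x y z : D x -> D y -> z = x + y -> D z.
Proof. by move=> Dx Dy ->; apply: subgroupD. Qed.

Lemma subgroupMn x n : D x -> D (x *+ n).
Proof.
by move=> Dx; elim: n => [|n IH]; [exact: subgroup0 | rewrite mulrS; apply: subgroupD].
Qed.

Lemma subgroupMz x k : D x -> D (x *~ k).
Proof.
move=> Dx; case: k => n; first exact: subgroupMn.
by rewrite NegzE mulrNz; apply/subgroupN/subgroupMn.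
Qed.

Lemma subgroup_lincomb l c : {in l, forall x, D x} -> D (lincomb l c).
Proof.
elim: l c => [|y l IH] c Dl /=; first exact: subgroup0.
apply: subgroupD; first by apply/subgroupMz/Dl; rewrite mem_head.
by apply: IH => x xl; apply: Dl; rewrite in_cons xl orbT.
Qed.

End Subgroups.

Arguments subgroupD_eq {N D} D_subgroup {x y z}.

Lemma subgroup_eq0 (N : zmodType) : subgroup (eq^~ (0 : N)).
Proof. by split=> // x y -> ->; rewrite subr0. Qed.

Lemma subgroup_is_int : subgroup is_int.
Proof. by split=> [|_ _ [x ->] [y ->]]; [exists 0 | exists (x - y); rewrite intrB]. Qed.

Lemma subgroup_zspan (N : zmodType) (l : seq N) : subgroup (zspan l).
Proof.
split; first by exists (fun _ => 0); rewrite lincomb0.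
by move=> _ _ [c ->] [c' ->]; exists (fun i => c i - c' i); rewrite lincombB.
Qed.

Lemma subgroup_image (N N' : zmodType) (f : {additive N -> N'}) :
  subgroup (fun y => exists x, y = f x).
Proof.
split; first by exists 0; rewrite raddf0.
by move=> _ _ [x ->] [x' ->]; exists (x - x'); rewrite raddfB.
Qed.

Lemma subgroup_kernel (N N' : zmodType) (f : {additive N -> N'}) :
  subgroup (fun x => f x = 0).
Proof. by split=> [|x y fx fy]; rewrite ?raddf0 // raddfB fx fy subr0. Qed.

Lemma exists_minimal (Q : nat -> Prop) :
  (exists n, Q n) -> exists n, Q n /\ forall m, (m < n)%N -> ~ Q m.
Proof.
move=> [n Qn]; apply: NNPP => no_min; elim/ltn_ind: n Qn => n IH Qn.
by apply: no_min; exists n; split=> // m /IH.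
Qed.

Lemma int_subgroup_cyclic (I : int -> Prop) :
  subgroup I -> exists d : nat, forall k, I k <-> (d %| k)%Z.
Proof.
move=> I_sub; case: (classic (exists n, I n.+1)) => [pos | no_pos]; last first.
  exists 0%N => k; rewrite dvd0z; split=> [Ik | /eqP-> ]; last exact: subgroup0.
  apply/eqP; case: k Ik => [[|n] | n] Ik //; case: no_pos; exists n => //.
  by move: Ik => /(subgroupN I_sub); rewrite NegzE opprK.
have [n [In min_n]] := exists_minimal pos; exists n.+1 => k; split; last first.
  by case/dvdzP=> q ->; have := subgroupMz I_sub q In; rewrite -mulrzr intz mulrC.
move=> Ik; have n1_neq0 : n.+1%:Z != 0 by [].
have Ir : I (k %% n.+1)%Z.
  have -> : (k %% n.+1)%Z = k - (k %/ n.+1)%Z * n.+1.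
    by apply/eqP; rewrite eq_sym subr_eq addrC -divz_eq.
  apply: subgroupB => //.
  by have := subgroupMz I_sub (k %/ n.+1)%Z In; rewrite -mulrzr intz mulrC.
apply/dvdz_mod0P; move: (modz_ge0 k n1_neq0) (ltz_pmod k (isT : 0 < n.+1%:Z)) Ir.
case: (k %% n.+1)%Z => [[|r] | r] //= _.
by rewrite ltz_nat ltnS => r_lt /(min_n r r_lt).
Qed.

(* For P = Z such a map is a lift of a homomorphism into Q/Z; for P = 0 it is a
   homomorphism into Q. *)
Definition hom_mod (P : rat -> Prop) (N : zmodType) (D : N -> Prop) (g : N -> rat) :=
  forall x y, D x -> D y -> P (g (x + y) - g x - g y).

Definition adjoin (N : zmodType) (D : N -> Prop) (y x : N) :=
  exists k, D (x - y *~ k).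

Definition adjoin_seq (N : zmodType) (D : N -> Prop) (l : seq N) (x : N) :=
  exists c, D (x - lincomb l c).

Section HomMod.
Variables (P : rat -> Prop) (N : zmodType).
Hypothesis P_subgroup : subgroup P.

Lemma hom_mod_sub (D D' : N -> Prop) g :
  (forall x, D' x -> D x) -> hom_mod P D g -> hom_mod P D' g.
Proof. by move=> D'D g_hom x y /D'D Dx /D'D Dy; apply: g_hom. Qed.

Variables (D : N -> Prop) (g : N -> rat).
Hypotheses (D_subgroup : subgroup D) (g_hom : hom_mod P D g).

Lemma hom_mod0 : P (g 0).
Proof.
have := g_hom (subgroup0 D_subgroup) (subgroup0 D_subgroup).
by rewrite addr0 subrr sub0r => /(subgroupN P_subgroup); rewrite opprK.
Qed.

Lemma hom_modN x : D x -> P (g (- x) + g x).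
Proof.
move=> Dx; have := g_hom (subgroupN D_subgroup Dx) Dx; rewrite addNr => gN.
by apply: (subgroupD_eq P_subgroup hom_mod0 (subgroupN P_subgroup gN)); ring.
Qed.

Lemma hom_modMz x k : D x -> P (g (x *~ k) - g x *~ k).
Proof.
move=> Dx; have hom_modMn n : P (g (x *+ n) - g x *+ n).
  elim: n => [|n IH]; first by rewrite !mulr0n subr0; apply: hom_mod0.
  have := g_hom Dx (subgroupMn D_subgroup n Dx); rewrite -mulrS => gS.
  by apply: (subgroupD_eq P_subgroup gS IH); rewrite mulrS; ring.
case: k => n; first exact: hom_modMn.
rewrite NegzE !mulrNz -!pmulrn.
have := hom_modN (subgroupMn D_subgroup n.+1 Dx) => gN.
by apply: (subgroupD_eq P_subgroup gN (subgroupN P_subgroup (hom_modMn n.+1))); ring.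
Qed.

Lemma hom_mod_lincomb l c :
  {in l, forall x, D x} -> P (g (lincomb l c) - lincomb (map g l) c).
Proof.
elim: l c => [|y l IH] c Dl /=; first by rewrite subr0; apply: hom_mod0.
have Dy : D y by apply: Dl; rewrite mem_head.
have {}Dl : {in l, forall x, D x} by move=> x xl; apply: Dl; rewrite in_cons xl orbT.
have := g_hom (subgroupMz D_subgroup (c 0%N) Dy)
  (subgroup_lincomb D_subgroup (fun i => c i.+1) Dl).
move/(subgroupD P_subgroup)/(_ (hom_modMz (c 0%N) Dy)) => gD.
by apply: (subgroupD_eq P_subgroup gD (IH _ Dl)); ring.
Qed.

End HomMod.

Section Extension.
Variables (P : rat -> Prop) (N : zmodType).
Hypothesis P_subgroup : subgroup P.
Implicit Types (D : N -> Prop) (g : N -> rat).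

Lemma subgroup_adjoin D y : subgroup D -> subgroup (adjoin D y).
Proof.
move=> D_sub; split; first by exists 0; rewrite mulr0z subr0; apply: subgroup0.
move=> x1 x2 [k1 D1] [k2 D2]; exists (k1 - k2).
have -> : x1 - x2 - y *~ (k1 - k2) = (x1 - y *~ k1) - (x2 - y *~ k2).
  by rewrite mulrzBr subrACA.
exact: subgroupB.
Qed.

Lemma hom_mod_extend1 D g y t : subgroup D -> hom_mod P D g ->
  (forall m, D (y *~ m) -> P (g (y *~ m) - t *~ m)) ->
  exists G, [/\ hom_mod P (adjoin D y) G, forall x, D x -> P (G x - g x)
              & P (G y - t)].
Proof.
move=> D_sub g_hom t_compat.
pose k x := epsilon (inhabits 0) (fun k => D (x - y *~ k)).
pose G x := g (x - y *~ k x) + t *~ k x.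
(* Any decomposition x = d + k' y computes G x modulo P, by compatibility of t. *)
have G_any x k' : D (x - y *~ k') -> P (G x - (g (x - y *~ k') + t *~ k')).
  move=> Dx'; have Dx : D (x - y *~ k x).
    by apply: (epsilon_spec (inhabits 0) (fun k => D (x - y *~ k))); exists k'.
  have Dy : D (y *~ (k' - k x)).
    have -> : y *~ (k' - k x) = (x - y *~ k x) - (x - y *~ k').
      by rewrite mulrzBr opprB [RHS]addrC addrA subrK.
    exact: subgroupB.
  have := g_hom _ _ Dx' Dy.
  have -> : x - y *~ k' + y *~ (k' - k x) = x - y *~ k x.
    by rewrite mulrzBr addrA subrK.
  move=> g_hom_x.
  by apply: (subgroupD_eq P_subgroup g_hom_x (t_compat _ Dy)); rewrite /G; ring.
exists G; split.
- move=> x1 x2 [k1 D1] [k2 D2].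
  have D12 : D (x1 + x2 - y *~ (k1 + k2)).
    by rewrite mulrzDr opprD addrACA; apply: subgroupD.
  have := g_hom _ _ D1 D2; rewrite -addrACA -opprD -mulrzDr => g_hom_12.
  have := subgroupD P_subgroup g_hom_12 (G_any _ _ D12) => G12.
  apply: (subgroupD_eq P_subgroup G12 (subgroupN P_subgroup
           (subgroupD P_subgroup (G_any _ _ D1) (G_any _ _ D2)))).
  by rewrite mulrzDr; ring.
- by move=> x Dx; have := G_any x 0; rewrite !mulr0z !subr0 ?addr0; apply.
- have := G_any y 1; rewrite !mulr1z subrr => /(_ (subgroup0 D_sub)) Gy.
  by apply: (subgroupD_eq P_subgroup Gy (hom_mod0 P_subgroup D_sub g_hom)); ring.
Qed.

Lemma hom_mod_compatible D g y : subgroup D -> hom_mod P D g ->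
  exists t, forall m, D (y *~ m) -> P (g (y *~ m) - t *~ m).
Proof.
move=> D_sub g_hom.
have I_sub : subgroup (fun m => D (y *~ m)).
  split=> [|m m' Dm Dm']; first by rewrite mulr0z; apply: subgroup0.
  by rewrite mulrzBr; apply: subgroupB.
have [[|d] Dd] := int_subgroup_cyclic I_sub.
  exists 0 => m /Dd; rewrite dvd0z => /eqP->.
  by rewrite !mulr0z subr0; apply: (hom_mod0 P_subgroup D_sub g_hom).
exists (g (y *~ d.+1) / d.+1%:R) => m /Dd /dvdzP[q ->].
have := hom_modMz P_subgroup D_sub g_hom q ((Dd d.+1).2 (dvdzz _)).
move=> Pq; rewrite [q * _]mulrC !mulrzA -[_ / _ *~ _]pmulrn.
by rewrite -[X in _ - X *~ q]mulr_natr divfK ?pnatr_eq0.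
Qed.

Lemma hom_mod_extend_seq D g l : subgroup D -> hom_mod P D g ->
  exists2 G, hom_mod P (adjoin_seq D l) G & forall x, D x -> P (G x - g x).
Proof.
elim: l D g => [|y l IH] D g D_sub g_hom.
  exists g => [|x _]; last by rewrite subrr; apply: subgroup0.
  by apply: hom_mod_sub g_hom => x [c]; rewrite subr0.
have [t t_compat] := hom_mod_compatible y D_sub g_hom.
have [G1 [G1_hom G1g _]] := hom_mod_extend1 D_sub g_hom t_compat.
have [G G_hom GG1] := IH _ _ (subgroup_adjoin y D_sub) G1_hom.
exists G.
  apply: hom_mod_sub G_hom => x [c Dx]; exists (fun i => c i.+1), (c 0%N).
  by rewrite -addrA -opprD [lincomb _ _ + _]addrC.
move=> x Dx; have D1x : adjoin D y x by exists 0; rewrite mulr0z subr0.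
by apply: (subgroupD_eq P_subgroup (GG1 _ D1x) (G1g _ Dx)); ring.
Qed.

Lemma hom_mod_extend D g : fin_gen N -> subgroup D -> hom_mod P D g ->
  exists2 G, hom_mod P (fun _ => True) G & forall x, D x -> P (G x - g x).
Proof.
move=> /fin_gen_zspan[s s_gen] D_sub g_hom.
have [G G_hom Gg] := hom_mod_extend_seq s D_sub g_hom.
exists G => //; apply: hom_mod_sub G_hom => x _.
by have [c ->] := s_gen x; exists c; rewrite subrr; apply: subgroup0.
Qed.

Lemma hom_mod_extend_at D g y t : fin_gen N -> subgroup D -> hom_mod P D g ->
  (forall m, D (y *~ m) -> P (g (y *~ m) - t *~ m)) ->
  exists2 G, hom_mod P (fun _ => True) G &
    (forall x, D x -> P (G x - g x)) /\ P (G y - t).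
Proof.
move=> N_fg D_sub g_hom t_compat.
have [G1 [G1_hom G1g G1y]] := hom_mod_extend1 D_sub g_hom t_compat.
have [G G_hom GG1] := hom_mod_extend N_fg (subgroup_adjoin y D_sub) G1_hom.
exists G => //; split=> [x Dx | ].
  have x_adj : adjoin D y x by exists 0; rewrite mulr0z subr0.
  by apply: (subgroupD_eq P_subgroup (GG1 _ x_adj) (G1g _ Dx)); ring.
have y_adj : adjoin D y y by exists 1; rewrite mulr1z subrr; apply: subgroup0.
by apply: (subgroupD_eq P_subgroup (GG1 _ y_adj) G1y); ring.
Qed.

End Extension.

Lemma hom_mod0_additive (N : zmodType) (G : N -> rat) :
  hom_mod (eq^~ 0) (fun _ => True) G -> zmod_morphism G.
Proof.
move=> G_hom x y; have GNy : G (- y) = - G y.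
  apply/eqP; rewrite -addr_eq0.
  exact/eqP/(hom_modN (subgroup_eq0 _) (D := fun _ => True) _ G_hom).
have := G_hom x (- y) I I; rewrite GNy => Gxy.
by apply/eqP; rewrite -subr_eq0; apply/eqP; rewrite -Gxy; ring.
Qed.

Definition additive_of_hom_mod0 (N : zmodType) (G : N -> rat)
  (G_hom : hom_mod (eq^~ 0) (fun _ => True) G) : {additive N -> rat} :=
  HB.pack G (GRing.isZmodMorphism.Build N rat G (hom_mod0_additive G_hom)).

Lemma lincomb_coset_reps (N : zmodType) (D : N -> Prop) (l : seq N) :
  subgroup D -> {in l, forall y, exists n, D (y *+ n.+1)} ->
  exists reps : seq N, forall c, exists2 r, r \in reps & D (lincomb l c - r).
Proof.
move=> D_sub; elim: l => [|y l IH] l_tors.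
  by exists [:: 0] => c; exists 0; rewrite ?mem_head // subrr; apply: subgroup0.
have [n Dyn] := l_tors y (mem_head y l).
have [reps reps_l] : exists reps : seq N,
    forall c, exists2 r, r \in reps & D (lincomb l c - r).
  by apply: IH => z zl; apply: l_tors; rewrite in_cons zl orbT.
exists [seq y *+ r + z | r <- iota 0 n.+1, z <- reps] => c.
have [z z_reps Dz] := reps_l (fun i => c i.+1).
set q := (c 0%N %/ n.+1)%Z; set r := (c 0%N %% n.+1)%Z.
have [m rm] : exists m : nat, r = m by exists `|r|%N; rewrite gez0_abs // modz_ge0.
have m_lt : (m < n.+1)%N by rewrite -ltz_nat -rm ltz_pmod.
exists (y *+ m + z); first by apply: allpairs_f; rewrite // mem_iota.
have -> : lincomb (y :: l) c - (y *+ m + z)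
          = y *+ n.+1 *~ q + (lincomb l (fun i => c i.+1) - z).
  rewrite /= {1}(divz_eq (c 0%N) n.+1) -/q -/r rm mulrzDr -pmulrn.
  by rewrite [q * _]mulrC mulrzA -pmulrn opprD addrACA addrK.
by apply: subgroupD => //; apply: subgroupMz.
Qed.

Lemma exists_hom_separating (N : zmodType) (D : N -> Prop) y :
  fin_gen N -> subgroup D -> (forall n, ~ D (y *+ n.+1)) ->
  exists2 G : N -> rat, hom_mod (eq^~ 0) (fun _ => True) G &
    (forall x, D x -> G x = 0) /\ G y = 1.
Proof.
move=> N_fg D_sub y_free.
have zero_hom : hom_mod (eq^~ 0) D (fun _ => 0) by move=> * /=; rewrite !subr0.
have compat m : D (y *~ m) -> 0 - 1 *~ m = 0 :> rat.
  case: m => [[|n] | n] //; first by move/y_free.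
  by rewrite NegzE mulrNz => /(subgroupN D_sub); rewrite opprK => /y_free.
have [G G_hom [G_D G_y]] :=
  hom_mod_extend_at (subgroup_eq0 rat) N_fg D_sub zero_hom compat.
by exists G => //; split=> [x /G_D | ]; [rewrite subr0 | apply: subr0_eq].
Qed.

Lemma common_denominator (T : eqType) (s : seq T) (G : T -> rat) :
  exists2 d : int, d != 0 & {in s, forall x, is_int (d%:~R * G x)}.
Proof.
elim: s => [|x s [d d_neq0 ds]]; first by exists 1.
exists (d * denq (G x)); first by rewrite mulf_neq0 ?denq_neq0.
move=> z; rewrite in_cons => /predU1P[-> | zs].
  by exists (d * numq (G x)); rewrite !intrM numqE; ring.
have [k dz] := ds z zs; exists (k * denq (G x)).
by rewrite !intrM mulrAC dz.
Qed.

Section Cokernel.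
Variables (N N' : zmodType) (f : {additive N -> N'}).

Lemma RHom_H_m1_zero_of_coker_finite : coker_finite f -> RHom_H_m1_zero f.
Proof.
move=> [s s_gen] phi phi_f _ y.
have [F FP] : exists F : 'I_(size s).+1 -> 'I_(size s),
    forall k : 'I_(size s).+1, exists x, y *+ k = s`_(F k) + f x.
  exact: (choice _ (fun k : 'I_(size s).+1 => s_gen (y *+ k))).
have /injectivePn[k1 [k2 k12 Fk]] : ~~ injectiveb F.
  by apply/injectiveP => /leq_card; rewrite !card_ord ltnn.
have [[x1 E1] [x2 E2]] := (FP k1, FP k2).
have : phi y *+ k1 = phi y *+ k2.
  apply/eqP; rewrite -subr_eq0 -!raddfMn -raddfB E1 E2 Fk.
  by rewrite opprD addrACA subrr add0r -raddfB phi_f.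
case: (eqVneq (phi y) 0) => // /mulrIn /[apply] k1k2.
by case/eqP: k12; apply: val_inj.
Qed.

Lemma coker_finite_of_RHom_H_m1_zero :
  fin_gen N' -> RHom_H_m1_zero f -> coker_finite f.
Proof.
move=> N'_fg H_m1; have [s s_gen] := fin_gen_zspan N'_fg.
have im_sub := subgroup_image f.
case: (classic (forall y : N', exists n x, y *+ n.+1 = f x)) => [N'_tors | ].
  have [reps reps_s] := lincomb_coset_reps im_sub (fun y (_ : y \in s) => N'_tors y).
  exists reps => y; have [c ->] := s_gen y; have [r r_reps [x Ex]] := reps_s c.
  have j_lt : (index r reps < size reps)%N by rewrite index_mem.
  by exists (Ordinal j_lt), x; rewrite nth_index // -Ex addrC subrK.
move=> /not_all_ex_not[y y_free]; exfalso.
have [G G_hom [G_im Gy]] := exists_hom_separating N'_fg im_sub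
  (fun n Dn => y_free (ex_intro _ n Dn)).
have [d d_neq0 d_int] := common_denominator s G.
have dG_hom : hom_mod (eq^~ 0) (fun _ => True) (fun z => d%:~R * G z).
  by move=> a b _ _; rewrite -!mulrBr G_hom ?mulr0.
pose phi := additive_of_hom_mod0 dG_hom.
suff /(_ y)/eqP : forall z, phi z = 0 by rewrite /= Gy mulr1 intr_eq0 (negPf d_neq0).
apply: H_m1 => [x | z]; first by rewrite /= G_im ?mulr0 //; exists x.
have [c ->] := s_gen z; rewrite raddf_lincomb.
by apply: (subgroup_lincomb subgroup_is_int) => _ /mapP[x xs ->]; apply: d_int.
Qed.

End Cokernel.

Lemma exists_hom_mod_int_order (N : zmodType) (x0 : N) (d : nat) :
  fin_gen N -> (forall m, x0 *~ m = 0 <-> (d %| m)%Z) ->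
  exists2 G : N -> rat, hom_mod is_int (fun _ => True) G & is_int (G x0 - d%:R^-1).
Proof.
move=> N_fg x0_ord.
have zero_hom : hom_mod is_int (eq^~ (0 : N)) (fun _ => 0).
  by move=> * /=; rewrite !subr0; exists 0.
have compat m : x0 *~ m = 0 -> is_int (0 - d%:R^-1 *~ m).
  move=> /x0_ord /dvdzP[q ->]; rewrite sub0r -mulrzr intrM.
  have [-> | d_neq0] := eqVneq d 0%N; first by exists 0; rewrite !mulr0 oppr0.
  by exists (- q); rewrite -pmulrn mulrCA mulVf ?pnatr_eq0 // mulr1 intrN.
have [G G_hom [_ Gx0]] :=
  hom_mod_extend_at subgroup_is_int N_fg (subgroup_eq0 N) zero_hom compat.
by exists G.
Qed.

Lemma not_is_int_invn (d : nat) : (1 < d)%N -> ~ is_int (d%:R^-1).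
Proof.
move=> d_gt1 [z Ez].
have : (0 < d%:R^-1 :> rat) && (d%:R^-1 < 1 :> rat).
  by rewrite invr_gt0 invf_lt1 ?ltr1n ?ltr0n // ltnW.
by rewrite Ez ltr0z ltrz1; case: z {Ez} => [[|k] | k].
Qed.

Section Independence.
Variable N : zmodType.
Implicit Types (y x : N) (l : seq N).

Lemma zspan_cons y l x : zspan (y :: l) x <-> adjoin (zspan l) y x.
Proof.
split=> [[c ->] | [k [c Ec]]].
  by exists (c 0%N), (fun i => c i.+1); rewrite /= addrC addKr.
by exists (fun i => if i is j.+1 then c j else k); rewrite /= -Ec addrC subrK.
Qed.

Lemma zindep_behead y l : zindep (y :: l) -> zindep l.
Proof.
move=> yl_indep c lc0 i i_lt.
have := yl_indep (fun i => if i is j.+1 then c j else 0) _ i.+1 i_lt.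
by rewrite /= mulr0z add0r; apply.
Qed.

Lemma zindep_cons_head y l k x :
  zindep (y :: l) -> zspan l x -> y *~ k + x = 0 -> k = 0.
Proof.
move=> yl_indep [c ->] E0.
exact: (yl_indep (fun i => if i is j.+1 then c j else k) E0 0%N).
Qed.

Lemma zindep_cons y l :
  zindep l -> (forall k x, zspan l x -> y *~ k + x = 0 -> k = 0) -> zindep (y :: l).
Proof.
move=> l_indep y_free c /= E0.
have c0 : c 0%N = 0 by apply: y_free E0; exists (fun i => c i.+1).
move: E0; rewrite c0 mulr0z add0r => /l_indep lc0.
by case=> [|i] // /lc0.
Qed.

Lemma zindep_lincomb_inj l c c' : zindep l ->
  lincomb l c = lincomb l c' -> forall i, (i < size l)%N -> c i = c' i.
Proof.
move=> l_indep E i /(l_indep (fun i => c i - c' i)) cc'.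
by apply/subr0_eq/cc'; rewrite lincombB E subrr.
Qed.

End Independence.

Section FreeApproximation.
Variable N : zmodType.
Implicit Types (y x : N) (l B : seq N).

Lemma zspan_multiple_of_dependent y B :
  zindep B -> ~ zindep (y :: B) -> exists2 K, (0 < K)%N & zspan B (y *+ K).
Proof.
move=> B_indep yB_dep.
have [k k_neq0 Byk] : exists2 k, k != 0 & zspan B (y *~ k).
  apply: NNPP => no_k; apply: yB_dep; apply: zindep_cons => // k x Bx ykx0.
  apply: NNPP => /eqP k_neq0; apply: no_k; exists k => //.
  by rewrite -[y *~ k]opprK (addr0_eq ykx0); exact: (subgroupN (subgroup_zspan B) Bx).
exists `|k|%N; first by rewrite absz_gt0.
case: k k_neq0 Byk => n; rewrite ?NegzE ?mulrNz -?pmulrn //.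
by move=> _ /(subgroupN (subgroup_zspan B)); rewrite opprK.
Qed.

Lemma zindep_span_multiple l :
  exists2 B, zindep B & exists2 M, (0 < M)%N & forall c, zspan B (lincomb l c *+ M).
Proof.
elim: l => [|y l [B B_indep [M M_gt0 BM]]].
  by exists [::] => [c _ [] | ]; last by exists 1%N => // c; exists (fun _ => 0).
have span_sub := subgroup_zspan B.
case: (classic (zindep (y :: B))) => [yB_indep | yB_dep].
  exists (y :: B) => //; exists M => // c; apply/zspan_cons.
  by exists (c 0%N * M); rewrite /= mulrnDl mulrzA -pmulrn addrC addKr.
have [K K_gt0 ByK] := zspan_multiple_of_dependent B_indep yB_dep.
exists B => //; exists (M * K)%N => [|c]; first by rewrite muln_gt0 M_gt0.
rewrite /= mulrnDl; apply: (subgroupD span_sub); last first.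
  by rewrite mulrnA; apply: (subgroupMn span_sub); apply: BM.
have -> : y *~ c 0%N *+ (M * K) = (y *+ K) *~ (c 0%N * M).
  by rewrite !pmulrn -!mulrzA; congr (y *~ _); rewrite PoszM; ring.
exact: (subgroupMz span_sub).
Qed.



Lemma zindep_cons_shift b B h E m :
  zindep (b :: B) -> zindep E -> {in E, forall x, zspan B x} ->
  zspan B (h - b *~ m) -> m != 0 -> zindep (h :: E).
Proof.
move=> bB_indep E_indep E_B Bh m_neq0; apply: zindep_cons => // k _ [c ->] E0.
have span_sub := subgroup_zspan B.
have Bx : zspan B ((h - b *~ m) *~ k + lincomb E c).
  apply: (subgroupD span_sub); first exact: (subgroupMz span_sub).
  exact: (subgroup_lincomb span_sub).
have : b *~ (m * k) + ((h - b *~ m) *~ k + lincomb E c) = 0.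
  by rewrite mulrzA addrA -mulrzDl [b *~ m + _]addrC subrK.
move/(zindep_cons_head bB_indep Bx)/eqP; rewrite mulf_eq0 (negPf m_neq0).
exact/eqP.
Qed.

Lemma subgroup_zspan_basis B (H : N -> Prop) :
  zindep B -> subgroup H -> (forall x, H x -> zspan B x) ->
  exists E, [/\ zindep E, {in E, forall x, H x} & forall x, H x -> zspan E x].
Proof.
elim: B H => [|b B IH] H B_indep H_sub H_B.
  by exists [::]; split.
have span_sub := subgroup_zspan B.
pose I k := exists2 h, H h & zspan B (h - b *~ k).
have I_sub : subgroup I.
  split; first by exists 0; rewrite ?mulr0z ?subr0; apply: subgroup0.
  move=> k k' [h Hh Bh] [h' Hh' Bh']; exists (h - h'); first exact: subgroupB.
  by rewrite mulrzBr subrACA; apply: subgroupB.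
have H_I x : H x -> exists2 k, I k & zspan B (x - b *~ k).
  by move=> Hx; have /zspan_cons[k Bx] := H_B x Hx; exists k => //; exists x.
have [[|d] Id] := int_subgroup_cyclic I_sub.
  apply: IH => //; first exact: zindep_behead B_indep.
  move=> x /H_I[k /Id]; rewrite dvd0z => /eqP->.
  by rewrite mulr0z subr0.
have [h0 Hh0 Bh0] := (Id d.+1).2 (dvdzz _).
have H'_sub : subgroup (fun x => H x /\ zspan B x).
  split=> [|x x' [Hx Bx] [Hx' Bx']]; first by split; apply: subgroup0.
  by split; apply: subgroupB.
have [E [E_indep E_H' E_span]] :=
  IH _ (zindep_behead B_indep) H'_sub (fun x Hx => Hx.2).
exists (h0 :: E); split.
- by apply: (zindep_cons_shift B_indep E_indep _ Bh0) => // z /E_H'[].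
- move=> x; rewrite in_cons => /predU1P[-> // | /E_H'[]//].
- move=> x /[dup] Hx /H_I[k /Id/dvdzP[q ->] Bx]; apply/zspan_cons; exists q.
  apply: E_span; split; first by apply: subgroupB => //; apply: subgroupMz.
  have -> : x - h0 *~ q = (x - b *~ (q * d.+1)) - (h0 - b *~ d.+1) *~ q.
    by rewrite mulrzBl -mulrzA [q * _]mulrC subrACA subrr subr0.
  by apply: subgroupB => //; apply: subgroupMz.
Qed.

End FreeApproximation.

Lemma torsion_free_subgroup_basis (N : zmodType) (K : N -> Prop) :
  fin_gen N -> subgroup K ->
  (forall x, K x -> forall n, (0 < n)%N -> x *+ n = 0 -> x = 0) ->
  exists U, [/\ zindep U, {in U, forall x, K x} & forall x, K x -> zspan U x].
Proof.
move=> /fin_gen_zspan[s s_gen] K_sub K_tf.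
(* M K lies in the free group span B, so it has a basis, which divided by M is
   a basis of K since multiplication by M is injective on K. *)
have [B B_indep [M M_gt0 BM]] := zindep_span_multiple s.
pose H y := exists2 x, K x & y = x *+ M.
have H_sub : subgroup H.
  split=> [|_ _ [x Kx ->] [x' Kx' ->]].
    by exists 0; rewrite ?mul0rn //; apply: subgroup0.
  by exists (x - x'); rewrite ?mulrnBl //; apply: subgroupB.
have H_B y : H y -> zspan B y by case=> x _ ->; have [c ->] := s_gen x.
have [E [E_indep E_H E_span]] := subgroup_zspan_basis B_indep H_sub H_B.
have [U [U_K EU]] : exists U, {in U, forall x, K x} /\ E = map (fun x => x *+ M) U.
  elim: E {E_indep E_span} E_H => [|e E IH] E_H; first by exists [::].
  have [x Kx ->] := E_H e (mem_head e E).
  have [U [U_K ->]] : exists U, {in U, forall x, K x} /\ E = map (fun x => x *+ M) U.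
    by apply: IH => z zE; apply: E_H; rewrite in_cons zE orbT.
  exists (x :: U); split=> // z; rewrite in_cons => /predU1P[-> // | /U_K//].
have KM_inj x x' : K x -> K x' -> x *+ M = x' *+ M -> x = x'.
  move=> Kx Kx' /eqP; rewrite -subr_eq0 -mulrnBl => /eqP xx'M.
  by apply/subr0_eq/(K_tf _ _ M) => //; apply: subgroupB.
exists U; split=> // [c Uc0 | x Kx].
  move=> i; rewrite -(size_map (fun x => x *+ M)) -EU; apply: E_indep.
  by rewrite EU lincomb_mapMn Uc0 mul0rn.
have [c Ec] := E_span (x *+ M) (ex_intro2 _ _ x Kx erefl).
exists c; apply: KM_inj => //; first exact: (subgroup_lincomb K_sub).
by rewrite Ec EU lincomb_mapMn.
Qed.

Lemma hom_mod_int_lift (N : zmodType) (K : N -> Prop) (U : seq N) (g : N -> rat) :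
  subgroup K -> zindep U -> {in U, forall x, K x} -> (forall x, K x -> zspan U x) ->
  hom_mod is_int K g ->
  exists2 a, hom_mod (eq^~ 0) K a & forall x, K x -> is_int (g x - a x).
Proof.
move=> K_sub U_indep U_K U_span g_hom.
pose coord x := epsilon (inhabits (fun _ => 0)) (fun c => x = lincomb U c).
have coordP x : K x -> x = lincomb U (coord x).
  move/U_span; exact: (epsilon_spec (inhabits (fun _ => 0)) (fun c => x = lincomb U c)).
exists (fun x => lincomb (map g U) (coord x)) => [x y Kx Ky | x Kx] /=.
  have Kxy := subgroupD K_sub Kx Ky.
  have := zindep_lincomb_inj (c := coord (x + y))
    (c' := fun i => coord x i + coord y i) U_indep.
  rewrite lincombD -!coordP // => /(_ erefl) coord_xy.
  rewrite (eq_lincomb (c' := fun i => coord x i + coord y i)) ?size_map // lincombD.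
  by rewrite addrAC addrK subrr.
rewrite {1}(coordP x Kx).
exact: (hom_mod_lincomb subgroup_is_int K_sub g_hom).
Qed.

Lemma hom_mod_factor (P : rat -> Prop) (N N' : zmodType) (f : {additive N -> N'})
    (h : N -> rat) :
  subgroup P -> fin_gen N' -> hom_mod P (fun _ => True) h ->
  (forall x, f x = 0 -> P (h x)) ->
  exists2 b, hom_mod P (fun _ => True) b & forall x, P (b (f x) - h x).
Proof.
move=> P_sub N'_fg h_hom h_ker.
pose pre y := epsilon (inhabits 0) (fun x => y = f x).
have pre_f x : P (h (pre (f x)) - h x).
  have fx : f x = f (pre (f x)).
    by apply: (epsilon_spec (inhabits 0) (fun z => f x = f z)); exists x.
  have f_diff : f (pre (f x) - x) = 0 by rewrite raddfB -fx subrr.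
  have := h_hom (pre (f x) - x) x I I; rewrite subrK => h_hom_x.
  by apply: (subgroupD_eq P_sub h_hom_x (h_ker _ f_diff)); ring.
have pre_hom : hom_mod P (fun y => exists x, y = f x) (fun y => h (pre y)).
  move=> _ _ [x1 ->] [x2 ->]; rewrite -raddfD.
  apply: (subgroupD_eq P_sub (subgroupB P_sub (pre_f (x1 + x2))
    (subgroupD P_sub (pre_f x1) (pre_f x2))) (h_hom x1 x2 I I)).
  by ring.
have [b b_hom b_pre] := hom_mod_extend P_sub N'_fg (subgroup_image f) pre_hom.
exists b => // x.
by apply: (subgroupD_eq P_sub (b_pre _ (ex_intro _ x erefl)) (pre_f x)); ring.
Qed.

Section Kernel.
Variables (N N' : zmodType) (f : {additive N -> N'}).

Lemma ker_torsion_free_of_RHom_H_1_zero :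
  fin_gen N -> RHom_H_1_zero f -> ker_torsion_free f.
Proof.
move=> N_fg H_1 x0 fx0 n n_gt0 x0n; apply: NNPP => x0_neq0.
have ord_sub : subgroup (fun k => x0 *~ k = 0).
  by split=> [|k k' Hk Hk']; rewrite ?mulr0z // mulrzBr Hk Hk' subrr.
have [d x0_ord] := int_subgroup_cyclic ord_sub.
have d_gt1 : (1 < d)%N.
  have : (d %| n%:Z)%Z by apply/x0_ord; rewrite -pmulrn.
  case: d x0_ord => [|[|d]] x0_ord //.
    by rewrite dvd0z => /eqP[n0]; move: n_gt0; rewrite n0.
  by move=> _; case: x0_neq0; rewrite -[x0]mulr1z; apply/x0_ord.
have [G G_hom Gx0] := exists_hom_mod_int_order N_fg x0_ord.
have [a [b [b_hom Gab]]] := H_1 G (fun x y => G_hom x y I I).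
have a_x0 : a x0 = 0.
  have := raddfMn a n x0; rewrite x0n raddf0 => /esym/eqP.
  by rewrite mulrn_eq0 eqn0Ngt n_gt0 => /eqP.
have b0 : is_int (b 0).
  exact: (hom_mod0 subgroup_is_int (D := fun _ => True) _ (fun x y _ _ => b_hom x y)).
have := Gab x0; rewrite /= fx0 a_x0 => Gx0_int.
apply: (not_is_int_invn d_gt1).
apply: (subgroupD_eq subgroup_is_int (subgroupB subgroup_is_int Gx0_int Gx0)
  (subgroupN subgroup_is_int b0)).
ring.
Qed.

Lemma RHom_H_1_zero_of_ker_torsion_free :
  fin_gen N -> fin_gen N' -> ker_torsion_free f -> RHom_H_1_zero f.
Proof.
move=> N_fg N'_fg f_tf g g_hom; have K_sub := subgroup_kernel f.
have [U [U_indep U_K U_span]] := torsion_free_subgroup_basis N_fg K_sub f_tf.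
have gK_hom : hom_mod is_int (fun x => f x = 0) g by move=> x y _ _; apply: g_hom.
have [a0 a0_hom g_a0] := hom_mod_int_lift K_sub U_indep U_K U_span gK_hom.
have [A A_hom A_a0] := hom_mod_extend (subgroup_eq0 rat) N_fg K_sub a0_hom.
pose a := additive_of_hom_mod0 A_hom.
have ag_hom : hom_mod is_int (fun _ => True) (fun x => a x - g x).
  move=> x y _ _; rewrite raddfD.
  have -> : a x + a y - g (x + y) - (a x - g x) - (a y - g y)
          = - (g (x + y) - g x - g y) by ring.
  exact: (subgroupN subgroup_is_int).
have ag_ker x : f x = 0 -> is_int (a x - g x).
  move=> fx0; have := subgroupN subgroup_is_int (g_a0 x fx0).
  by rewrite /= (subr0_eq (A_a0 x fx0)) opprB.
have [b b_hom b_f] := hom_mod_factor subgroup_is_int N'_fg ag_hom ag_ker.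
exists a, b; split=> [x y | x]; first exact: b_hom.
by have -> : g x - (a x - b (f x)) = b (f x) - (a x - g x) by ring.
Qed.

End Kernel.

Theorem proposition3p9p9 (N N' : zmodType) (f : {additive N -> N'}) :
  fin_gen N -> fin_gen N' ->
  (tame f <-> augmentation_iso f) /\
  (augmentation_iso f <-> (forall i : int, i != 0 -> RHom_H_zero f i)).
Proof.
move=> N_fg N'_fg; split; split.
- move=> [f_coker f_ker]; split; first exact: RHom_H_m1_zero_of_coker_finite.
  exact: RHom_H_1_zero_of_ker_torsion_free.
- move=> [H_m1 H_1]; split; first exact: coker_finite_of_RHom_H_m1_zero.
  exact: ker_torsion_free_of_RHom_H_1_zero.
- move=> [H_m1 H_1] i i_neq0; rewrite /RHom_H_zero.
  by case: eqP => // _; case: eqP => // _; rewrite (negPf i_neq0).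
- by move=> H; split; [exact: H (-1) isT | exact: H 1 isT].
Qed.
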